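(* Let $G$ be an undirected graph and $n\ge 4$ an even integer. Then $G$ admits a homomorphism to the undirected cycle $C_{n-1}$ if and only if $G$ admits an acyclic orientation containing no induced subgraph isomorphic to a member of $F_n\setminus\{\overrightarrow{C}_3,\overrightarrow{C}_4\}$.
   Context: Graph homomorphisms are vertex maps sending edges to edges (for digraphs: arcs to arcs). An orientation of an undirected graph assigns exactly one direction to each edge; it is acyclic if it has no directed cycle. $\overrightarrow{C}_k$ is the directed cycle on $k$ vertices. For $n\ge 3$, $Q_n$ is the oriented path $(q_0,\dots,q_{n-1})$ on $n$ distinct vertices, with exactly one arc between $q_i$ and $q_{i+1}$ for each $i$ and no other arcs, such that: the first two arcs are $q_0\to q_1$ and $q_1\to q_2$; the subpath $(q_1,\dots,q_{n-2})$ is alternating (consecutive arcs have opposite directions); and the last two arcs have the same direction. For even $n\ge 4$, $F_n$ is the set (up to isomorphism) of oriented graphs $H$ for which there is a homomorphism $Q_n\to H$ that is surjective on vertices. *)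

(* Finite simple graphs as symmetric irreflexive relations. *)
From mathcomp Require Import all_boot.
Set Implicit Arguments. Unset Strict Implicit. Unset Printing Implicit Defensive.

Definition hom (T W : finType) (e : rel T) (b : rel W) : Prop :=
  exists f : T -> W, forall x y, e x y -> b (f x) (f y).

Definition Cyc (m : nat) : rel 'I_m :=
  fun i j => (val j == (val i).+1 %% m) || (val i == (val j).+1 %% m).

Definition DCyc (k : nat) : rel 'I_k :=
  fun i j => val j == (val i).+1 %% k.

Definition orientation (T : finType) (e o : rel T) : Prop :=
  (forall x y, o x y -> e x y) /\ (forall x y, e x y -> o x y = ~~ o y x).

Definition acyclic (T : finType) (o : rel T) : Prop :=
  forall x y, o x y -> ~~ connect o y x.

Definition oriented (V : finType) (a : rel V) : Prop :=
  (forall u, ~~ a u u) /\ (forall u v, a u v -> ~~ a v u).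

(* direction of the arc between q_i and q_{i+1} in Q_n (true = q_i -> q_{i+1}):
   arcs 0 and 1 forward, arcs 1..n-3 alternate, arc n-2 same as arc n-3. *)
Definition qfwd0 (i : nat) : bool := (i == 0) || odd i.
Definition qfwd (n i : nat) : bool :=
  if i == n - 2 then qfwd0 (n - 3) else qfwd0 i.

Definition Qarc (n : nat) : rel 'I_n :=
  fun i j => ((val j == (val i).+1) && qfwd n i)
          || ((val i == (val j).+1) && ~~ qfwd n j).

Arguments Qarc n : clear implicits.
Definition inF (n : nat) (V : finType) (a : rel V) : Prop :=
  oriented a /\
  exists f : 'I_n -> V,
    (forall i j, Qarc n i j -> a (f i) (f j)) /\ (forall v, exists i, f i = v).

Arguments inF n [V] a.
Definition diso (V W : finType) (a : rel V) (b : rel W) : Prop :=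
  exists phi : V -> W, bijective phi /\ forall u v, a u v = b (phi u) (phi v).

Definition induced_copy (V T : finType) (a : rel V) (o : rel T) : Prop :=
  exists phi : V -> T, injective phi /\ forall u v, a u v = o (phi u) (phi v).
Arguments Cyc m : clear implicits.
Arguments DCyc k : clear implicits.

From mathcomp Require Import all_boot zify.
Set Implicit Arguments. Unset Strict Implicit. Unset Printing Implicit Defensive.

(* Let Z be the orientation of the odd cycle C_(n-1) with arcs 0 -> 1 -> 2 and
   0 -> n-2, in which every odd vertex a >= 3 is a source (a -> a-1, a -> a+1).
   Its only directed 2-path is 0 -> 1 -> 2.  Q_n begins and ends with a directed
   2-path and alternates in between; under a homomorphism Q_n -> Z the image of
   q_i in that middle section stays a positive number of the parity of i, so
   q_(n-3) cannot reach 0.  Pulling Z back along a colouring G -> C_(n-1)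
   therefore yields an acyclic orientation (Z has a strictly increasing rank)
   into which Q_n does not map at all, so no member of F_n is induced in it.

   Conversely, let D be an acyclic orientation of G with none of the forbidden
   induced subgraphs.  The image of a homomorphism Q_n -> D is an induced member
   of F_n, and acyclicity rules out C3 and C4; so Q_n does not map to D, and we
   map D to Z instead.  As D has no directed 3-walk, a vertex with both in- and
   out-arcs goes to 1; a sink goes to the least even L >= 2 such that the first
   L arcs of Q_n map into D ending at it, a source to the least such odd L
   (with defaults n-2 and 0).  Minimality of these depths makes every arc of D
   land on an arc of Z. *)

Lemma hom_comp (T U W : finType) (e : rel T) (b : rel U) (c : rel W) :
  hom e b -> hom b c -> hom e c.
Proof. by move=> [f hf] [g hg]; exists (g \o f) => x y /hf /hg. Qed.

Lemma diso_hom (V W : finType) (a : rel V) (b : rel W) : diso a b -> hom b a.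
Proof.
by move=> [phi [[psi _ psiK] hphi]]; exists psi => i j bij; rewrite hphi !psiK.
Qed.

Lemma induced_copy_hom (V T : finType) (a : rel V) (o : rel T) :
  induced_copy a o -> hom a o.
Proof. by move=> [phi [_ hphi]]; exists phi => u v; rewrite hphi. Qed.

Lemma acyclic_rank (T : finType) (o : rel T) (r : T -> nat) :
  (forall x y, o x y -> r x < r y) -> acyclic o.
Proof.
move=> r_mono x y oxy; apply/negP => /connectP [p op lastp].
suff : r y <= r x by have := r_mono _ _ oxy; lia.
rewrite lastp; elim: p y op {oxy lastp} => [|z p IH] y //= /andP [oyz /IH].
exact: leq_trans (ltnW (r_mono _ _ oyz)).
Qed.

Lemma acyclic_no_hom_DCyc (T : finType) (o : rel T) k :
  0 < k -> acyclic o -> ~ hom (DCyc k) o.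
Proof.
case: k => // k _ ac [f hf].
have step i : i < k -> o (f (inord i)) (f (inord i.+1)).
  by move=> ik; apply: hf; rewrite /DCyc /= !inordK ?modn_small //; lia.
have reach i : i <= k -> connect o (f (inord 0)) (f (inord i)).
  elim: i => [|i IH] ik; first exact: connect0.
  exact: connect_trans (IH (ltnW ik)) (connect1 (step i ik)).
have back : o (f (inord k)) (f (inord 0)).
  by apply: hf; rewrite /DCyc /= !inordK // modnn.
by have := ac _ _ back; rewrite reach.
Qed.

Lemma orientation_pullback (T W : finType) (e : rel T) (c oc : rel W) (f : T -> W) :
  symmetric e -> orientation c oc -> (forall x y, e x y -> c (f x) (f y)) ->
  orientation e (fun x y => e x y && oc (f x) (f y)).
Proof.
move=> esym [_ oc_orients] hf; split=> [x y /andP [] //|x y exy].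
by rewrite /= exy -esym exy (oc_orients _ _ (hf _ _ exy)).
Qed.

Lemma orientation_hom (T W : finType) (e o : rel T) (c : rel W) :
  orientation e o -> symmetric c -> hom o c -> hom e c.
Proof.
move=> [_ eo] csym [f hf]; exists f => x y exy.
case oxy: (o x y); first exact: hf.
by rewrite csym; apply: hf; move: (eo _ _ exy); rewrite oxy => /esym/negbFE.
Qed.

Lemma orientation_oriented (T : finType) (e o : rel T) :
  irreflexive e -> orientation e o -> oriented o.
Proof.
move=> eirr [oe eo]; split=> [u|u v ouv]; first by apply/negP => /oe; rewrite eirr.
by rewrite -(eo _ _ (oe _ _ ouv)).
Qed.

Lemma hom_Qarc_inF (T : finType) (o : rel T) n :
  oriented o -> hom (Qarc n) o ->
  exists (V : finType) (a : rel V), inF n a /\ induced_copy a o.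
Proof.
move=> [oirr oanti] [G hG].
exists {x : T | x \in codom G}, (fun u v => o (val u) (val v)).
split; last by exists val; split; first exact: val_inj.
split; first by split=> [u|u v]; [exact: oirr | exact: oanti].
exists (fun i => exist _ (G i) (codom_f G i)); split=> [i j /hG //|[x hx]].
by have /codomP [i xE] := hx; exists i; apply: val_inj; rewrite /= xE.
Qed.

Definition Qwalk (T : Type) (o : rel T) (n : nat) (g : nat -> T) : Prop :=
  forall i, i.+1 < n -> if qfwd n i then o (g i) (g i.+1) else o (g i.+1) (g i).

Lemma qfwd_even n i : ~~ odd n -> 4 <= n -> qfwd n i = [|| i == 0, odd i | i == n - 2].
Proof. by move=> evn n4; rewrite /qfwd /qfwd0; case: ifP; lia. Qed.

Lemma Qwalk_hom (T : finType) (o : rel T) n g : Qwalk o n g -> hom (Qarc n) o.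
Proof.
move=> hg; exists (fun i : 'I_n => g i) => -[i hi] [j hj]; rewrite /Qarc /=.
case/orP=> /andP [/eqP E q]; subst.
  by move: (hg i hj); rewrite q.
by move: (hg j hi); rewrite (negbTE q).
Qed.

Lemma hom_Qwalk (T : finType) (o : rel T) n :
  0 < n -> hom (Qarc n) o -> exists g, Qwalk o n g.
Proof.
case: n => // n _ [G hG]; exists (fun i => G (inord i)) => i lt_in.
case q: (qfwd n.+1 i); apply: hG; rewrite /Qarc /= !inordK ?eqxx ?q ?orbT //; lia.
Qed.

Definition Qprefix (T : Type) (o : rel T) (g : nat -> T) (L : nat) : Prop :=
  forall i, i < L -> if qfwd0 i then o (g i) (g i.+1) else o (g i.+1) (g i).

(* A boolean version of QendP's conclusion, so that least lengths can be taken. *)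
Fixpoint Qend (T : finType) (o : rel T) (L : nat) (x : T) : bool :=
  if L is L'.+1 then
    [exists y, Qend o L' y && (if qfwd0 L' then o y x else o x y)]
  else true.

Lemma QendS (T : finType) (o : rel T) L x y :
  Qend o L y -> (if qfwd0 L then o y x else o x y) -> Qend o L.+1 x.
Proof. by move=> hy hyx; apply/existsP; exists y; apply/andP. Qed.

Lemma QendP (T : finType) (o : rel T) L x :
  Qend o L x -> exists g, Qprefix o g L /\ g L = x.
Proof.
elim: L x => [|L IH] x /=; first by exists (fun=> x).
case/existsP=> y /andP [/IH [g [pg gL]] yx].
exists (fun i => if i == L.+1 then x else g i); split; last by rewrite eqxx.
move=> i; rewrite ltnS leq_eqVlt => /orP [/eqP ->|iL].
  by rewrite eqxx (ltn_eqF (ltnSn L)) gL.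
by rewrite !ltn_eqF //; [exact: pg | lia].
Qed.

(* Bouncing along the last (backward) arc lengthens a prefix by two arcs
   without moving its endpoint. *)
Lemma Qprefix_pad (T : Type) (o : rel T) g L L' :
  odd L -> 1 < L -> L <= L' -> odd L' ->
  Qprefix o g L -> exists g', Qprefix o g' L' /\ g' L' = g L.
Proof.
move=> oddL L1 LL' oddL' pg.
have back : o (g L) (g L.-1).
  have := pg L.-1 ltac:(lia); rewrite prednK; last lia.
  by have -> : qfwd0 L.-1 = false by rewrite /qfwd0; lia.
exists (fun i => if L < i then g (if odd i then L else L.-1) else g i); split.
  move=> i iL'; case: (ltnP i L) => iL.
    have -> : (L < i) = false by lia.
    have -> : (L < i.+1) = false by lia.
    exact: pg.
  have -> : qfwd0 i = odd i by rewrite /qfwd0; lia.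
  have -> : L < i.+1 by lia.
  case: (ltnP L i) => [_|Li]; first by rewrite /=; case: (odd i).
  have -> : i = L by lia.
  by rewrite oddL /= oddL.
by case: ltnP => [_|?]; [rewrite oddL' | have -> : L' = L by lia].
Qed.

Lemma Qprefix_close (T : finType) (o : rel T) g L v z :
  odd L -> Qprefix o g L -> o (g L) v -> o v z -> hom (Qarc L.+3) o.
Proof.
move=> oddL pg gv vz.
apply: (@Qwalk_hom _ _ _ (fun i => if i == L.+2 then z else if i == L.+1 then v else g i)).
move=> i iL; rewrite qfwd_even ?oddS ?negbK //; last lia.
have -> : L.+3 - 2 = L.+1 by lia.
case: (ltngtP i L) => [iL'|Li|->]; last by rewrite oddL orbT eqxx !ltn_eqF.
- have -> : [|| i == 0, odd i | i == L.+1] = qfwd0 i by rewrite /qfwd0; lia.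
  have -> : (i == L.+2) = false by lia.
  have -> : (i == L.+1) = false by lia.
  have -> : (i.+1 == L.+2) = false by lia.
  have -> : (i.+1 == L.+1) = false by lia.
  exact: pg.
- have -> : i = L.+1 by lia.
  by rewrite (eqxx L.+1) orbT (eqxx L.+2) (ltn_eqF (ltnSn L.+1)).
Qed.

Lemma Qend_close (T : finType) (o : rel T) n L u v z :
  4 <= n -> ~~ odd n -> odd L -> 1 < L -> L <= n - 3 ->
  Qend o L u -> o u v -> o v z -> hom (Qarc n) o.
Proof.
move=> n4 evn oddL L1 Ln /QendP [g [pg gL]] uv vz.
have [g' [pg' g'L]] := Qprefix_pad oddL L1 Ln ltac:(lia) pg.
have -> : n = (n - 3).+3 by lia.
by apply: Qprefix_close pg' _ vz; [lia | rewrite g'L gL].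
Qed.

(* The walk x0 x1 x2 x1 x2 ... x1 is a prefix of any odd length. *)
Lemma walk3_hom (T : finType) (o : rel T) n x0 x1 x2 x3 :
  4 <= n -> ~~ odd n -> o x0 x1 -> o x1 x2 -> o x2 x3 -> hom (Qarc n) o.
Proof.
move=> n4 evn a01 a12 a23.
pose g i := if i == 0 then x0 else if odd i then x1 else x2.
have pg : Qprefix o g (n - 3).
  case=> [|i] _ //; rewrite /g /qfwd0 /=.
  by case: (odd i); rewrite /= ?a12.
have g_end : g (n - 3) = x1 by rewrite /g ifF ?ifT //; lia.
have -> : n = (n - 3).+3 by lia.
by apply: (Qprefix_close _ pg _ a23); rewrite ?g_end //; lia.
Qed.

Definition zigzag (m a b : nat) : bool :=
  [|| (a == 0) && ((b == 1) || (b == m.-1)), (a == 1) && (b == 2)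
    | [&& odd a, 2 < a & (b == a.-1) || (b == a.+1)]].

Definition Zigzag (m : nat) : rel 'I_m := fun i j => zigzag m i j.
Arguments Zigzag m : clear implicits.

Lemma modn_succ m i : i < m -> i.+1 %% m = if i.+1 == m then 0 else i.+1.
Proof. by move=> im; case: eqP => [->|ne]; rewrite ?modnn // modn_small //; lia. Qed.

Lemma CycE m (i j : 'I_m) :
  Cyc m i j = [|| j == i.+1 :> nat, i == j.+1 :> nat,
                  (i == 0 :> nat) && (j == m.-1 :> nat)
                | (j == 0 :> nat) && (i == m.-1 :> nat)].
Proof.
case: i j => [i im] [j jm]; rewrite /Cyc /= !modn_succ //.
by case: (i.+1 =P m); case: (j.+1 =P m); lia.
Qed.

Lemma Cyc_sym m : symmetric (Cyc m).
Proof. by move=> i j; rewrite /Cyc orbC. Qed.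

Lemma zigzag_succ m a : odd m -> 2 < m -> a.+1 < m ->
  zigzag m a a.+1 = ~~ zigzag m a.+1 a.
Proof.
move=> oddm m3 am; rewrite /zigzag.
have [->|a0] := eqVneq a 0; first by rewrite /=; lia.
have [->|a1] := eqVneq a 1; first by rewrite /=; lia.
by case: (boolP (odd a)) => oa; apply/idP/idP; lia.
Qed.

Lemma zigzag_wrap m : odd m -> 2 < m -> zigzag m 0 m.-1 = ~~ zigzag m m.-1 0.
Proof. by move=> oddm m3; rewrite /zigzag; apply/idP/idP; lia. Qed.

Lemma Zigzag_orientation m : odd m -> 2 < m -> orientation (Cyc m) (Zigzag m).
Proof.
move=> oddm m3; split=> -[i im] [j jm]; rewrite CycE /Zigzag /=.
  rewrite /zigzag; case/or3P=> [/andP [/eqP-> /orP [] /eqP->] | /andP [/eqP-> /eqP->]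
             | /and3P [oi i2 /orP [] /eqP->]]; lia.
case/or4P=> [/eqP ? | /eqP ? | /andP [/eqP ? /eqP ?] | /andP [/eqP ? /eqP ?]]; subst.
- exact: zigzag_succ.
- by rewrite zigzag_succ ?negbK.
- exact: zigzag_wrap.
- by rewrite zigzag_wrap ?negbK.
Qed.

Definition zigzag_rank (a : nat) : nat := (a == 1) + ((a != 0) && ~~ odd a).*2.

Lemma zigzag_rank_lt m a b :
  odd m -> 2 < m -> zigzag m a b -> zigzag_rank a < zigzag_rank b.
Proof. by rewrite /zigzag /zigzag_rank; lia. Qed.

Lemma zigzag_2path m a b c :
  odd m -> 2 < m -> zigzag m a b -> zigzag m b c -> [/\ a = 0, b = 1 & c = 2].
Proof. by rewrite /zigzag => oddm m3 ab bc; split; lia. Qed.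

Lemma zigzag_parity_step m i x y :
  odd m -> i.+2 < m -> 0 < x <= i -> odd x = odd i ->
  (if odd i then zigzag m x y else zigzag m y x) -> 0 < y <= i.+1 /\ odd y = odd i.+1.
Proof. by move=> oddm im xi px; rewrite /zigzag; case: ifP => oi; lia. Qed.

Lemma zigzag_source_sink m a b :
  odd m -> 1 < a <= m -> odd a -> 1 < b <= m.-1 -> odd b = false ->
  (a < m -> b <= a.+1) -> (b < m.-1 -> a <= b.+1) -> zigzag m (a %% m) b.
Proof.
move=> oddm ha oa hb ob ba ab; rewrite /zigzag.
have [am|lt] : a = m \/ a < m by lia.
  by rewrite am modnn; lia.
by rewrite modn_small //; lia.
Qed.

Lemma no_Qwalk_zigzag L h : odd L -> ~ Qwalk (zigzag L.+2) L.+3 h.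
Proof.
move=> oddL; have L0 : 0 < L by lia.
have evn : ~~ odd L.+3 by rewrite /= !negbK.
have n4 : 4 <= L.+3 by rewrite !ltnS.
move=> hw; have fwd i : i < L.+2 -> [|| i == 0, odd i | i == L.+1] -> zigzag L.+2 (h i) (h i.+1).
  by move=> iL q; have := hw i iL; rewrite (qfwd_even i evn n4) q.
have bwd i : i < L.+2 -> ~~ [|| i == 0, odd i | i == L.+1] -> zigzag L.+2 (h i.+1) (h i).
  by move=> iL q; have := hw i iL; rewrite (qfwd_even i evn n4) (negbTE q).
have oddm : odd L.+2 by rewrite /= negbK.
have m3 : 2 < L.+2 by rewrite !ltnS.
have [_ h1 h2] := zigzag_2path oddm m3 (fwd 0 isT isT) (fwd 1 isT isT).
have [hL _ _] := zigzag_2path oddm m3 (fwd L (ltnW (ltnSn _)) ltac:(by rewrite oddL orbT))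
                                      (fwd L.+1 (ltnSn _) ltac:(by rewrite eqxx !orbT)).
have [L1|L3] : L = 1 \/ 2 < L by lia.
  by move: hL; rewrite L1 h1.
have inv d : 2 + d <= L -> 0 < h (2 + d) <= 2 + d /\ odd (h (2 + d)) = odd (2 + d).
  elim: d => [|d IH] dL; first by rewrite h2.
  have [IH1 IH2] := IH (ltnW dL).
  rewrite addnS; apply: (zigzag_parity_step oddm _ IH1 IH2); first lia.
  case: ifP => oi; [apply: fwd | apply: bwd]; rewrite ?oi ?orbT //; lia.
have [] := inv (L - 2) ltac:(lia).
by rewrite (_ : 2 + (L - 2) = L) ?hL; lia.
Qed.

Lemma Zigzag_no_Qarc n : 4 <= n -> ~~ odd n -> ~ hom (Qarc n) (Zigzag (n - 1)).
Proof.
move=> n4 evn; have [L -> oddL] : exists2 L, n = L.+3 & odd L by exists (n - 3); lia.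
rewrite subn1 => /(@hom_Qwalk _ _ L.+3 isT) [g hg].
exact: (@no_Qwalk_zigzag L (fun i => val (g i)) oddL).
Qed.

Section ZigzagColouring.

Variables (T : finType) (o : rel T) (n : nat).
Hypotheses (n4 : 4 <= n) (n_even : ~~ odd n) (noQ : ~ hom (Qarc n) o).

Local Notation m := (n - 1).

Definition depth_pred (p : bool) (d : nat) (x : T) : pred nat :=
  fun L => (1 < L) && (odd L == p) && Qend o L x || (L == d).

Lemma depth_pred_default p d x : exists L, depth_pred p d x L.
Proof. by exists d; rewrite /depth_pred eqxx orbT. Qed.

Definition depth p d x : nat := ex_minn (depth_pred_default p d x).

Lemma depthP p d x : 1 < d -> odd d = p ->
  [/\ 1 < depth p d x <= d, odd (depth p d x) = p & depth p d x < d -> Qend o (depth p d x) x].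
Proof.
move=> d1 dp; rewrite /depth; case: ex_minnP => L + minL.
have Ld : L <= d by apply: minL; rewrite /depth_pred eqxx orbT.
case/orP=> [/andP [/andP [L1 /eqP pL] qL] | /eqP ->]; first by rewrite L1 Ld.
by rewrite d1 leqnn ltnn.
Qed.

Lemma depth_min p d x L : 1 < L -> odd L = p -> Qend o L x -> depth p d x <= L.
Proof.
move=> L1 pL qL; rewrite /depth; case: ex_minnP => k _; apply.
by rewrite /depth_pred L1 pL eqxx qL.
Qed.

Definition zigzag_colour (x : T) : nat :=
  if [exists y, o y x] then (if [exists y, o x y] then 1 else depth false m.-1 x)
  else depth true m x %% m.

Lemma no_walk3 x0 x1 x2 x3 : o x0 x1 -> o x1 x2 -> o x2 x3 -> False.
Proof. by move=> a b c; apply: noQ; exact: walk3_hom a b c. Qed.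

Lemma short_Qend_no_walk2 L u v z :
  odd L -> 1 < L -> L < m -> Qend o L u -> o u v -> o v z -> False.
Proof.
move=> oddL L1 Lm qu uv vz; apply: noQ.
by apply: (Qend_close n4 n_even oddL L1 _ qu uv vz); lia.
Qed.

Lemma zigzag_colour_arc u v : o u v -> zigzag m (zigzag_colour u) (zigzag_colour v).
Proof.
move=> uv; have in_v : [exists y, o y v] by apply/existsP; exists u.
have out_u : [exists y, o u y] by apply/existsP; exists v.
rewrite /zigzag_colour in_v out_u.
have oddm : odd m by lia.
have [/andP [a1 am] oa qa] := @depthP true m u ltac:(lia) ltac:(lia).
have [/andP [b1 bm] ob qb] := @depthP false m.-1 v ltac:(lia) ltac:(lia).
case: existsP => [[w wu] | _].
  have -> : [exists y, o v y] = false by apply/negbTE/existsP => -[z /(no_walk3 wu uv)].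
  have q1 : Qend o 1 u by apply/existsP; exists w.
  have b2 : depth false m.-1 v <= 2 by apply: depth_min => //; apply: QendS q1 uv.
  by have -> : depth false m.-1 v = 2 by apply/anti_leq/andP.
case: existsP => [[z vz] | _].
  have am' : ~ depth true m u < m := fun lt => short_Qend_no_walk2 oa a1 lt (qa lt) uv vz.
  have -> : depth true m u = m by apply/anti_leq; rewrite am /= leqNgt; apply/negP.
  by rewrite modnn.
apply: zigzag_source_sink; rewrite ?a1 ?am ?b1 ?bm //.
- move=> lt; apply: depth_min; [by rewrite ltnS ltnW | by rewrite /= oa | apply: QendS (qa lt) _].
  by rewrite /qfwd0 oa orbT.
- move=> lt; apply: depth_min; [by rewrite ltnS ltnW | by rewrite /= ob | apply: QendS (qb lt) _].
  by rewrite /qfwd0 ob orbF (gtn_eqF (ltnW b1)).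
Qed.

Lemma zigzag_colour_lt x : zigzag_colour x < m.
Proof.
rewrite /zigzag_colour; case: ifP => _; last by rewrite ltn_mod; lia.
case: ifP => _; first lia.
by have [/andP [_ bm] _ _] := @depthP false m.-1 x ltac:(lia) ltac:(lia); lia.
Qed.

Lemma hom_Zigzag : hom o (Zigzag m).
Proof. by exists (fun x => Ordinal (zigzag_colour_lt x)) => x y /zigzag_colour_arc. Qed.

End ZigzagColouring.

Theorem mainTheorem12 (T : finType) (e : rel T) (n : nat) :
  symmetric e -> irreflexive e -> 4 <= n -> ~~ odd n ->
  (hom e (Cyc (n - 1)) <->
   exists o : rel T,
     [/\ orientation e o, acyclic o &
      forall (V : finType) (a : rel V),
        inF n a -> ~ diso a (DCyc 3) -> ~ diso a (DCyc 4) ->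
        ~ induced_copy a o]).
Proof.
move=> esym eirr n4 evn.
have oddm : odd (n - 1) by lia.
have m3 : 2 < n - 1 by lia.
have Zor := Zigzag_orientation oddm m3.
split=> [[f hf] | [o [eo ac no_copy]]].
  exists (fun x y => e x y && Zigzag (n - 1) (f x) (f y)); split.
  - exact: orientation_pullback esym Zor hf.
  - apply: (@acyclic_rank _ _ (fun x => zigzag_rank (f x))) => x y /andP [_].
    exact: zigzag_rank_lt oddm m3.
  - move=> V a [_ [q hq]] _ _ /induced_copy_hom hao.
    apply: (Zigzag_no_Qarc n4 evn); apply: hom_comp (hom_comp (ex_intro _ q hq.1) hao) _.
    by exists f => x y /andP [].
have noQ : ~ hom (Qarc n) o.
  move=> /(hom_Qarc_inF (orientation_oriented eirr eo)) [V [a [aF copy]]].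
  have no_cycle k : 0 < k -> ~ diso a (DCyc k).
    move=> k0 /diso_hom hka; apply: (acyclic_no_hom_DCyc k0 ac).
    exact: hom_comp hka (induced_copy_hom copy).
  exact: no_copy aF (no_cycle 3 isT) (no_cycle 4 isT) copy.
apply: orientation_hom eo (@Cyc_sym _) _.
apply: hom_comp (hom_Zigzag n4 evn noQ) _.
by exists id; case: Zor.
Qed.
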